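(* Let $R$ be a finite commutative principal ideal ring with unity. Suppose that $R$ has exactly two associated prime ideals $p_1,p_2$ (i.e. $\lvert \operatorname{Ass}(R)\rvert=2$) and that $p_1\cap p_2=\{0\}$. Then the zero divisor graph $\Gamma(R)$ is a divisor graph.
   Context: $\operatorname{Ass}(R)$ is the set of associated primes of $R$ as an $R$-module, i.e. prime ideals of $R$ of the form $\operatorname{ann}(x)$ for some nonzero $x\in R$. The zero divisor graph $\Gamma(R)$ is the simple graph whose vertex set is the set of nonzero zero divisors of $R$, distinct $a,b$ adjacent iff $ab=0$. For a nonempty set $T$ of positive integers, the divisor graph $G(T)$ has vertex set $T$, with distinct $i,j$ adjacent iff $i\mid j$ or $j\mid i$; a graph is a divisor graph if it is isomorphic to some $G(T)$. *)

From HB Require Import structures.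
From mathcomp Require Import all_boot all_order all_algebra.
Set Implicit Arguments. Unset Strict Implicit. Unset Printing Implicit Defensive.
Import GRing.Theory.
Local Open Scope ring_scope.

Section RingDefs.
Variable R : finComNzRingType.

Definition is_ideal (I : {set R}) : bool :=
  [&& 0 \in I,
      [forall x in I, forall y in I, x + y \in I],
      [forall x in I, - x \in I] &
      [forall r, forall x in I, r * x \in I]].

Definition principal_ideal (a : R) : {set R} := [set a * r | r : R].

Definition is_PIR : Prop :=
  forall I : {set R}, is_ideal I -> exists a : R, I = principal_ideal a.

Definition is_prime_ideal (P : {set R}) : bool :=
  [&& is_ideal P, P != setT &
      [forall a, forall b, (a * b \in P) ==> (a \in P) || (b \in P)]].

Definition ann (x : R) : {set R} := [set y | y * x == 0].

Definition Ass : {set {set R}} :=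
  [set P | is_prime_ideal P && [exists x, (x != 0) && (P == ann x)]].

Definition zdiv_vertex (a : R) : bool :=
  (a != 0) && [exists b, (b != 0) && (a * b == 0)].

(* adjacency in the zero divisor graph (on distinct vertices) *)
Definition zd_adj (a b : R) : bool := a * b == 0.

End RingDefs.

(* A graph with vertex set V (a predicate on a finite type T) and adjacency e
   is a divisor graph if it is isomorphic to G(S) for some nonempty set S of
   positive integers: there is an injection f of V into positive integers such
   that distinct u, v are adjacent iff f u | f v or f v | f u.  The image f(V)
   is the set S. *)
Definition is_divisor_graph (T : finType) (V : pred T) (e : rel T) : Prop :=
  (exists v, V v) /\
  exists f : T -> nat,
    [/\ {in V &, injective f},
        {in V, forall v, (0 < f v)%N} &
        {in V &, forall u v, u != v -> e u v = ((f u %| f v) || (f v %| f u))%N}].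

(* The nonzero elements of p1 and of p2 are exactly the nonzero zero divisors.
   Since p1 p2 lies in p1 :&: p2 = 0, any two of them on different sides are
   adjacent; two nonzero elements on the same side, say of p1, lie outside the
   prime p2, so their product lies outside p2 and is nonzero.  Thus Gamma(R) is
   a complete bipartite graph, and a complete bipartite graph is a divisor
   graph: label one side by distinct integers from ]N, 2N], which form a
   divisibility antichain, and the other side by c times such integers, where c
   is a common multiple of them all. *)

From HB Require Import structures.
From mathcomp Require Import all_boot all_order all_algebra.
From mathcomp Require Import zify.
Set Implicit Arguments. Unset Strict Implicit. Unset Printing Implicit Defensive.
Import GRing.Theory.

Lemma dvdn_lt_double (m n : nat) : 0 < n -> n < 2 * m -> m %| n -> m = n.
Proof.
by move=> n_gt0 n_lt2m /dvdnP[k def_n]; subst n; case: k n_gt0 n_lt2m => [|[|k]]; lia.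
Qed.

Section CompleteBipartite.
Variables (T : finType) (A : pred T).

Let N := #|T|.
Let label (v : T) : nat := (N + enum_rank v).+1.
Let c : nat := (2 * N).+1`!.
Let code (v : T) : nat := if A v then label v else c * label v.

Let label_le (v : T) : label v <= 2 * N.
Proof. by have : (enum_rank v < N) := ltn_ord _; rewrite /label; lia. Qed.

Let c_gt0 : 0 < c. Proof. exact: fact_gt0. Qed.

Let label_lt_c (v : T) : label v < c.
Proof. exact: leq_ltn_trans (label_le v) (fact_geq _). Qed.

Let label_dvdn_c (v : T) : label v %| c.
Proof. by apply: dvdn_fact; rewrite leqW ?label_le. Qed.

Let label_gt (v : T) : N < label v.
Proof. exact: leq_addr. Qed.

Let label_inj : injective label.
Proof. by move=> u v /eqP; rewrite eqSS eqn_add2l => /eqP/val_inj/enum_rank_inj. Qed.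

Let label_dvdn (u v : T) : (label u %| label v) = (u == v).
Proof.
apply/idP/eqP => [dvd_uv | -> //]; apply/label_inj/dvdn_lt_double => //.
by have := label_le v; have := label_gt u; lia.
Qed.

Let code_gt0 (v : T) : 0 < code v.
Proof. by rewrite /code; case: (A v) => //; rewrite muln_gt0 c_gt0. Qed.

Let code_dvdn_same (u v : T) : A u = A v -> (code u %| code v) = (u == v).
Proof. by rewrite /code => <-; case: (A u); rewrite ?dvdn_pmul2l //; apply: label_dvdn. Qed.

Let code_dvdn_mixed (u v : T) : A u -> ~~ A v -> code u %| code v.
Proof. by rewrite /code => -> /negbTE ->; apply/dvdn_mulr/label_dvdn_c. Qed.

Let code_lt_mixed (u v : T) : A u -> ~~ A v -> code u < code v.
Proof.
rewrite /code => -> /negbTE ->.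
by apply: leq_trans (label_lt_c u) _; rewrite leq_pmulr.
Qed.

Let code_inj_side (u v : T) : code u = code v -> A u = A v.
Proof.
move=> code_uv; case Au: (A u); case Av: (A v) => //.
  by have := code_lt_mixed Au (negbT Av); rewrite code_uv ltnn.
by have := code_lt_mixed Av (negbT Au); rewrite code_uv ltnn.
Qed.

Let code_comparable (u v : T) :
  u != v -> (code u %| code v) || (code v %| code u) = (A u != A v).
Proof.
move=> u_neq_v; case Au: (A u); case Av: (A v) => /=.
1,4: by rewrite !code_dvdn_same ?Au ?Av // (negPf u_neq_v) eq_sym (negPf u_neq_v).
- by rewrite (code_dvdn_mixed Au (negbT Av)).
- by rewrite (code_dvdn_mixed Av (negbT Au)) orbT.
Qed.

Lemma complete_bipartite_divisor_graph (V : pred T) (e : rel T) :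
  (exists v, V v) ->
  {in V &, forall u v, u != v -> e u v = (A u != A v)} ->
  is_divisor_graph V e.
Proof.
move=> V_nonempty eE; split=> //; exists code; split.
- move=> u v _ _ code_uv; apply/eqP.
  by rewrite -(code_dvdn_same (code_inj_side code_uv)) code_uv.
- by move=> v _; apply: code_gt0.
- by move=> u v Vu Vv u_neq_v; rewrite eE // code_comparable.
Qed.

End CompleteBipartite.

Local Open Scope ring_scope.

Section Ideals.
Variable R : finComNzRingType.
Implicit Types (I J P : {set R}) (a b r x y : R).

Lemma is_ideal0 I : is_ideal I -> 0 \in I.
Proof. by case/and4P. Qed.

Lemma is_idealMl I r x : is_ideal I -> x \in I -> r * x \in I.
Proof. by case/and4P => _ _ _ /forallP/(_ r)/forall_inP; apply. Qed.

Lemma is_prime_ideal_ideal P : is_prime_ideal P -> is_ideal P.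
Proof. by case/and3P. Qed.

Lemma is_prime_idealM P a b : is_prime_ideal P -> a * b \in P -> (a \in P) || (b \in P).
Proof. by case/and3P => _ _ /forallP/(_ a)/forallP/(_ b)/implyP. Qed.

Lemma disjoint_ideals_mul0 I J a b :
  is_ideal I -> is_ideal J -> I :&: J = [set 0] -> a \in I -> b \in J -> a * b = 0.
Proof.
move=> idI idJ IJ0 aI bJ; apply/set1P; rewrite -IJ0 inE (is_idealMl a idJ bJ).
by rewrite mulrC (is_idealMl b idI aI).
Qed.

Lemma disjoint_prime_mul_neq0 I P a b :
  is_prime_ideal P -> I :&: P = [set 0] ->
  a \in I -> b \in I -> a != 0 -> b != 0 -> a * b != 0.
Proof.
move=> primeP IP0 aI bI a0 b0; have notinP x : x \in I -> x != 0 -> x \notin P.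
  by move=> xI; apply: contra => xP; rewrite -in_set1 -IP0 inE xI.
apply: contraNneq (notinP _ aI a0) => ab0.
have /(is_prime_idealM primeP)/orP[// | bP] : a * b \in P.
  by rewrite ab0 is_ideal0 ?is_prime_ideal_ideal.
by have := notinP _ bI b0; rewrite bP.
Qed.

Lemma ann_ideal x : is_ideal (ann x).
Proof.
apply/and4P; split.
- by rewrite inE mul0r.
- by apply/forall_inP => y; rewrite inE => /eqP y0; apply/forall_inP => z;
    rewrite !inE mulrDl y0 => /eqP ->; rewrite addr0.
- by apply/forall_inP => y; rewrite !inE mulNr => /eqP ->; rewrite oppr0.
- by apply/forallP => r; apply/forall_inP => y; rewrite !inE -mulrA => /eqP ->; rewrite mulr0.
Qed.

Lemma ann_maximal_prime y :
  y != 0 -> (forall z, z != 0 -> ann y \subset ann z -> ann z \subset ann y) ->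
  is_prime_ideal (ann y).
Proof.
move=> y0 maxy; rewrite /is_prime_ideal ann_ideal /=; apply/andP; split.
  by apply: contraNneq y0 => annT; have := in_setT (1 : R); rewrite -annT inE mul1r.
apply/forallP => r; apply/forallP => s; apply/implyP; rewrite !inE => rsy0.
have [// | ry0] := eqVneq (r * y) 0; rewrite orFb.
have annyS : ann y \subset ann (r * y).
  by apply/subsetP => z; rewrite !inE mulrCA => /eqP ->; rewrite mulr0.
by have := subsetP (maxy _ ry0 annyS) s; rewrite !inE mulrA (mulrC s r); apply.
Qed.

Lemma zero_divisor_mem_Ass a b : b != 0 -> a * b = 0 -> exists2 P, P \in Ass R & a \in P.
Proof.
move=> b0 ab0; pose annihilates_a y := (y != 0) && (a * y == 0).
have candb : annihilates_a b by rewrite /annihilates_a b0 ab0 eqxx.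
have [y /andP[y0 ay0] maxy] := arg_maxnP (fun y => #|ann y|) candb.
have primey : is_prime_ideal (ann y).
  apply: ann_maximal_prime => // z z0 annyz.
  have /eqP-> // : ann y == ann z.
  rewrite eqEcard annyz; apply: maxy; rewrite /annihilates_a z0.
  by have := subsetP annyz a; rewrite !inE; apply.
exists (ann y); last by rewrite inE.
by rewrite inE primey; apply/existsP; exists y; rewrite y0 eqxx.
Qed.

Lemma AssP P : P \in Ass R -> is_prime_ideal P /\ exists2 x, x != 0 & P = ann x.
Proof.
by rewrite inE => /andP[primeP /existsP[x /andP[x0 /eqP Px]]]; split=> //; exists x.
Qed.

Lemma zdiv_vertex_Ass a : zdiv_vertex a = (a != 0) && [exists P in Ass R, a \in P].
Proof.
rewrite /zdiv_vertex; case: (a != 0) => //=; apply/existsP/existsP.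
  case=> b /andP[b0 /eqP ab0]; have [P AssP' aP] := zero_divisor_mem_Ass b0 ab0.
  by exists P; rewrite AssP'.
case=> P /andP[/AssP[_ [x x0 ->]]]; rewrite inE => ax0.
by exists x; rewrite x0.
Qed.

Lemma zdiv_vertex_Ass2 P Q a :
  Ass R = [set P; Q] -> zdiv_vertex a = (a != 0) && ((a \in P) || (a \in Q)).
Proof.
move=> AssE; rewrite zdiv_vertex_Ass AssE; congr (_ && _); apply/existsP/orP.
  by case=> P' /andP[/set2P[]-> aP']; [left | right].
by case=> aPQ; [exists P | exists Q]; rewrite !inE eqxx ?orbT.
Qed.

Lemma ideals_neq_nonzero_mem I J :
  is_ideal I -> is_ideal J -> I != J -> [exists a, (a != 0) && ((a \in I) || (a \in J))].
Proof.
move=> idI idJ; apply: contraNT => /existsPn no_nonzero; apply/eqP/setP => z.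
have [-> | z0] := eqVneq z 0; first by rewrite !is_ideal0.
by have := no_nonzero z; rewrite z0 negb_or => /andP[/negPf-> /negPf->].
Qed.

End Ideals.

Section TwoPrimes.
Variables (R : finComNzRingType) (p1 p2 : {set R}).
Hypotheses (prime_p1 : is_prime_ideal p1) (prime_p2 : is_prime_ideal p2).
Hypothesis p1Ip2 : p1 :&: p2 = [set 0].

Lemma two_primes_mul_eq0 u v :
  u != 0 -> v != 0 -> (u \in p1) || (u \in p2) -> (v \in p1) || (v \in p2) ->
  (u * v == 0) = ((u \in p1) != (v \in p1)).
Proof.
have [id1 id2] := (is_prime_ideal_ideal prime_p1, is_prime_ideal_ideal prime_p2).
have p2Ip1 : p2 :&: p1 = [set 0] by rewrite setIC.
case up1: (u \in p1); case vp1: (v \in p1) => /= u0 v0 up2 vp2.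
- exact/negbTE/(disjoint_prime_mul_neq0 prime_p2 p1Ip2).
- exact/eqP/(disjoint_ideals_mul0 id1 id2).
- by rewrite mulrC; apply/eqP/(disjoint_ideals_mul0 id1 id2).
- exact/negbTE/(disjoint_prime_mul_neq0 prime_p1 p2Ip1).
Qed.

End TwoPrimes.

Theorem theorem2p7 (R : finComNzRingType) (p1 p2 : {set R}) :
  is_PIR R ->
  p1 != p2 ->
  Ass R = [set p1; p2] ->
  p1 :&: p2 = [set 0] ->
  is_divisor_graph (@zdiv_vertex R) (@zd_adj R).
Proof.
move=> _ p1_neq_p2 AssE p1Ip2.
have [prime_p1 prime_p2] : is_prime_ideal p1 /\ is_prime_ideal p2.
  by split; apply: (AssP _).1; rewrite AssE !inE eqxx ?orbT.
have [ideal_p1 ideal_p2] := (is_prime_ideal_ideal prime_p1, is_prime_ideal_ideal prime_p2).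
apply: (complete_bipartite_divisor_graph (A := fun v => v \in p1)).
  have /existsP[v /andP[v0 v_p1p2]] := ideals_neq_nonzero_mem ideal_p1 ideal_p2 p1_neq_p2.
  by exists v; rewrite (zdiv_vertex_Ass2 _ AssE) v0.
move=> u v; rewrite -!topredE /= !(zdiv_vertex_Ass2 _ AssE).
move=> /andP[u0 u_p1p2] /andP[v0 v_p1p2] _.
by rewrite /zd_adj (two_primes_mul_eq0 prime_p1 prime_p2 p1Ip2 u0 v0 u_p1p2 v_p1p2).
Qed.
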